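(* Let $n>2$, let $d\subseteq 2\times(n-2)$ be a Young diagram, and let $d^|=\{s,t\}$ with $1\le s<t\le n$ be its set of vertical steps. For odd integers $0<a<b<2n$ let $I_{a,b}=\{e^{\frac{\pi}{n}ia},e^{\frac{\pi}{n}ib}\}$ (every 2-element subset of the roots of $\zeta^n=-1$ has this form). Then $S_d(I_{a,b})=0$ if and only if $n$ divides $\frac{b-a}{2}(t-s)$.
   Context: A Young diagram $d\subseteq 2\times(n-2)$ has row lengths $n-2\ge d_1\ge d_2\ge0$. Its profile path runs from the top-right corner to the bottom-left corner of the $2\times(n-2)$ rectangle in $n$ unit steps, labelled $1,\dots,n$ in order; $d^|\subset\{1,\dots,n\}$ is the set of labels of the two vertical steps. $S_d(z_1,z_2)=\sum_T z_1^{t_1}z_2^{t_2}$ is the two-variable Schur polynomial, summing over semistandard tableaux $T$ of shape $d$ with entries in $\{1,2\}$ (rows weakly increasing, columns strictly increasing), $t_i$ the number of entries equal to $i$; being symmetric, it can be evaluated on an unordered 2-element set. *)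

From HB Require Import structures.
From mathcomp Require Import all_boot all_order all_algebra all_field.
Unset Printing Implicit Defensive.
Import Order.TTheory GRing.Theory Num.Theory.
Local Open Scope ring_scope.

(* A Young diagram d inside the 2 x (n-2) rectangle is given by its row
   lengths d1 >= d2 (with n-2 >= d1).  Cells are pairs (i, j) with
   i : 'I_2 (row, 0 = top) and j : 'I_(n-2) (column). *)
Definition in_diag (n d1 d2 : nat) (c : 'I_2 * 'I_(n - 2)) : bool :=
  (c.2 < (if c.1 == ord0 then d1 else d2))%N.

(* A filling with entries in {1,2}; entry k : 'I_2 stands for k+1.
   Cells outside the diagram are normalised to ord0 so that fillings
   correspond bijectively to functions on the cells of d. *)
Definition ssyt (n d1 d2 : nat) (T : {ffun 'I_2 * 'I_(n - 2) -> 'I_2}) : bool :=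
  [&& [forall c, ~~ in_diag n d1 d2 c ==> (T c == ord0)],
      [forall i : 'I_2, forall j : 'I_(n - 2), forall j' : 'I_(n - 2),
         [&& in_diag n d1 d2 (i, j), in_diag n d1 d2 (i, j') & (j <= j')%N]
         ==> (T (i, j) <= T (i, j'))%N] &
      [forall i : 'I_2, forall i' : 'I_2, forall j : 'I_(n - 2),
         [&& in_diag n d1 d2 (i, j), in_diag n d1 d2 (i', j) & (i < i')%N]
         ==> (T (i, j) < T (i', j))%N]].

Definition tcount (n d1 d2 : nat) (T : {ffun 'I_2 * 'I_(n - 2) -> 'I_2})
  (k : 'I_2) : nat :=
  #|[pred c | in_diag n d1 d2 c && (T c == k)]|.

Definition schur2 {R : comNzRingType} (n d1 d2 : nat) (z1 z2 : R) : R :=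
  \sum_(T : {ffun 'I_2 * 'I_(n - 2) -> 'I_2} | ssyt n d1 d2 T)
     z1 ^+ tcount n d1 d2 T ord0 * z2 ^+ tcount n d1 d2 T ord_max.

(* Profile path of d, from the top-right corner to the bottom-left corner
   of the 2 x (n-2) rectangle: n steps, true = vertical step. *)
Definition profile (n d1 d2 : nat) : seq bool :=
  nseq (n - 2 - d1) false ++ [:: true] ++ nseq (d1 - d2) false
  ++ [:: true] ++ nseq d2 false.

Definition vsteps (n d1 d2 : nat) : seq nat :=
  [seq i.+1 | i <- iota 0 n & nth false (profile n d1 d2) i].

(* e^{pi i / n} in algC: the principal n-th root of -1 (minimal argument) *)
Definition zeta (n : nat) : algC := n.-root (-1).

From HB Require Import structures.
From mathcomp Require Import all_boot all_order all_algebra all_field.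
From mathcomp Require Import zify ring lra.
Import Order.TTheory GRing.Theory Num.Theory.

Set Implicit Arguments.
Unset Strict Implicit.
Unset Printing Implicit Defensive.

(* A semistandard tableau of shape (d1, d2) with entries in {1, 2} has a second
   row of 2's and a first row 1...12...2 whose 2's avoid the first d2 columns,
   so with m = d1 - d2
     S_d(z1, z2) = (z1 z2)^d2 (z1^m + z1^(m-1) z2 + ... + z2^m),
   which for z1 <> z2 vanishes iff z1^(m+1) = z2^(m+1).  The two vertical steps
   of the profile are m + 1 apart, i.e. t - s = m + 1.  Finally e^(i pi/n) is a
   primitive 2n-th root of unity, so e^(i pi a (t-s)/n) = e^(i pi b (t-s)/n) iff
   2n divides (b - a)(t - s). *)

Lemma nth_two_trues (A B C i : nat) :
  nth false (nseq A false ++ [:: true] ++ nseq B false ++ [:: true] ++ nseq C false) i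
  = (i == A) || (i == A + B + 1).
Proof.
rewrite nth_cat size_nseq nth_nseq; case: ltnP => [iA|Ai]; first lia.
case iA: (i - A) => [|j] /=; first lia.
rewrite nth_cat size_nseq nth_nseq; case: ltnP => [jB|Bj]; first lia.
case jB: (j - B) => [|l] /=; first lia.
rewrite nth_nseq if_same; lia.
Qed.

Lemma mem_vsteps (n d1 d2 : nat) : 1 < n -> d2 <= d1 -> d1 <= n - 2 ->
  vsteps n d1 d2 =i [:: n.-1 - d1; n - d2].
Proof.
move=> n_gt1 d21 d1n x; rewrite /vsteps /profile; apply/mapP/idP => [[i]|].
  by rewrite mem_filter mem_iota nth_two_trues !inE => /andP[/orP[]/eqP-> _] ->; lia.
rewrite !inE => /orP[]/eqP->; [exists (n - 2 - d1) | exists (n.-1 - d2)];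
  rewrite ?mem_filter ?mem_iota ?nth_two_trues; lia.
Qed.

Lemma vsteps_gap (n d1 d2 s t : nat) : 1 < n -> d2 <= d1 -> d1 <= n - 2 ->
  vsteps n d1 d2 =i [:: s; t] -> s < t -> t - s = (d1 - d2).+1.
Proof.
move=> n_gt1 d21 d1n st_vsteps s_lt_t.
have := mem_vsteps n_gt1 d21 d1n s; have := mem_vsteps n_gt1 d21 d1n t.
rewrite !st_vsteps !inE !eqxx orbT /= => /esym/orP[]/eqP t_eq /esym/orP[]/eqP s_eq; lia.
Qed.

Lemma mono_pred_threshold (P : pred nat) (lo hi : nat) : lo <= hi ->
    (forall i j, lo <= i -> i <= j < hi -> P i -> P j) ->
  exists2 k, lo <= k <= hi & forall i, lo <= i < hi -> P i = (k <= i).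
Proof.
elim: hi => [|hi IHhi] lo_le P_mono; first by exists lo => [|i]; lia.
have [<-|lo_neq] := eqVneq lo hi.+1; first by exists lo => [|i]; lia.
have [k k_bnd Pk] : exists2 k, lo <= k <= hi & forall i, lo <= i < hi -> P i = (k <= i).
  by apply: IHhi => [|i j lo_i ij]; [lia | apply: P_mono; lia].
case Phi: (P hi).
  exists k => [|i i_bnd]; first lia.
  by have [->|?] := eqVneq i hi; [rewrite Phi; lia | apply: Pk; lia].
exists hi.+1 => [|i i_bnd]; first lia.
rewrite [RHS]leqNgt ltnS (_ : i <= hi); last lia.
by apply: (contraFF _ Phi) => /P_mono; apply; lia.
Qed.

Lemma card_ord_range (N lo hi : nat) (P : pred 'I_N) :
  (forall j, P j = (lo <= j < hi)) -> #|[pred j | P j]| = minn hi N - lo.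
Proof.
move=> P_range; rewrite -sum1_card (eq_bigl (fun j : 'I_N => lo <= j < hi)); last first.
  by move=> j; rewrite inE P_range.
clear P P_range; rewrite -(big_mkord (fun j => lo <= j < hi) (fun _ => 1)).
elim: N => [|N IHN]; first by rewrite big_geq //; lia.
rewrite big_mkcond big_nat_recr //= -big_mkcond IHN; case: ifP; lia.
Qed.

Lemma card_pair_ord2 (N : nat) (P : pred ('I_2 * 'I_N)) :
  #|P| = #|[pred j | P (ord0, j)]| + #|[pred j | P (ord_max, j)]|.
Proof.
rewrite -!sum1_card (eq_bigl (fun c => P (c.1, c.2))) => [|[//]].
rewrite -(pair_big_dep xpredT (fun i j => P (i, j)) (fun _ _ => 1)) /=.
rewrite big_ord_recl big_ord1 (_ : lift ord0 ord0 = ord_max) //; exact: val_inj.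
Qed.

Lemma ord2P (i : 'I_2) : i = ord0 \/ i = ord_max.
Proof. by case: i => [[|[|//]] ?]; [left | right]; apply: val_inj. Qed.

Section TwoRowTableaux.
Variables n d1 d2 : nat.
Hypotheses (d21 : d2 <= d1) (d1n : d1 <= n - 2).

Definition tableau (k : nat) : {ffun 'I_2 * 'I_(n - 2) -> 'I_2} :=
  [ffun c : 'I_2 * 'I_(n - 2) =>
     if (if c.1 == ord0 then d1 - k <= c.2 < d1 else c.2 < d2) then ord_max else ord0].

Lemma ssyt_tableau k : k <= d1 - d2 -> ssyt n d1 d2 (tableau k).
Proof.
move=> k_le; apply/and3P; split.
- apply/forallP => -[i j]; apply/implyP; rewrite /in_diag ffunE.
  case: (ord2P i) => -> /=; repeat case: ifP => /=; rewrite -?val_eqE /=; lia.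
- apply/forallP => i; apply/forallP => j; apply/forallP => j'.
  apply/implyP; rewrite /in_diag !ffunE.
  case: (ord2P i) => -> /=; repeat case: ifP => /=; lia.
- apply/forallP => i; apply/forallP => i'; apply/forallP => j.
  apply/implyP; rewrite /in_diag !ffunE.
  case: (ord2P i) => ->; case: (ord2P i') => -> /=; repeat case: ifP => /=; lia.
Qed.

Lemma tcount_tableau k : k <= d1 ->
  tcount n d1 d2 (tableau k) ord0 = d1 - k /\ tcount n d1 d2 (tableau k) ord_max = d2 + k.
Proof.
move=> k_le; rewrite /tcount !card_pair_ord2; split;
  [rewrite (@card_ord_range _ 0 (d1 - k)) ?(@card_ord_range _ 0 0)
  |rewrite (@card_ord_range _ (d1 - k) d1) ?(@card_ord_range _ 0 d2)]; try lia;
  by move=> j; rewrite inE /in_diag ffunE /=; case: ifP; rewrite -?val_eqE /=; lia.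
Qed.

Lemma ssyt_is_tableau T : ssyt n d1 d2 T -> exists2 k, k <= d1 - d2 & T = tableau k.
Proof.
case/and3P => /forallP T_out /forallP T_row /forallP T_col.
have T_outside c : ~~ in_diag n d1 d2 c -> T c = ord0.
  by move=> c_out; apply/eqP; apply: (implyP (T_out c)).
have row0_mono (j j' : 'I_(n - 2)) : j <= j' < d1 -> T (ord0, j) <= T (ord0, j').
  move=> jj'; move/forallP/(_ j)/forallP/(_ j')/implyP: (T_row ord0); apply.
  rewrite /in_diag /=; lia.
have col_lt (j : 'I_(n - 2)) : j < d2 -> T (ord0, j) < T (ord_max, j).
  move=> j_lt; move/forallP/(_ ord_max)/forallP/(_ j)/implyP: (T_col ord0); apply.
  rewrite /in_diag /=; lia.
have row1 j : T (ord_max, j) = if j < d2 then ord_max else ord0.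
  case: ifP => j_lt; last by apply: T_outside; rewrite /in_diag /= j_lt.
  by have := col_lt j j_lt; case: (ord2P (T (ord_max, j))) => ->; rewrite ?ltn0.
have row0_lt (j : 'I_(n - 2)) : j < d2 -> T (ord0, j) = ord0.
  move=> j_lt; have := col_lt j j_lt; rewrite row1 j_lt.
  by case: (ord2P (T (ord0, j))) => ->.
pose P j := if insub j is Some j' then T (ord0, j') == ord_max else false.
have P_T (j : 'I_(n - 2)) : P j = (T (ord0, j) == ord_max) by rewrite /P valK.
have P_mono i j : d2 <= i -> i <= j < d1 -> P i -> P j.
  move=> d2_i ij; have i_lt : i < n - 2 by lia.
  have j_lt : j < n - 2 by lia.
  rewrite -[i]/(val (Ordinal i_lt)) -[j]/(val (Ordinal j_lt)) !P_T.
  have := row0_mono (Ordinal i_lt) (Ordinal j_lt) ij.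
  by case: (ord2P (T (ord0, Ordinal j_lt))) => -> //; case: (ord2P (T (ord0, Ordinal i_lt))) => ->.
have [k0 k0_bnd P_k0] := mono_pred_threshold d21 P_mono.
exists (d1 - k0); first lia.
apply/ffunP => -[i j]; rewrite ffunE /=; case: (ord2P i) => -> /=; last exact: row1.
rewrite (_ : d1 - (d1 - k0) = k0); last lia.
have [j_lt|d2_j] := ltnP j d2; first by rewrite row0_lt //; case: ifP => //; lia.
have [j_lt|d1_j] := ltnP j d1; last by rewrite andbF T_outside // /in_diag /= -leqNgt.
rewrite andbT -P_k0 ?d2_j // P_T.
by case: (ord2P (T (ord0, j))) => ->.
Qed.

Local Open Scope ring_scope.

Lemma schur2E (R : comNzRingType) (z1 z2 : R) :
  schur2 n d1 d2 z1 z2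
  = (z1 * z2) ^+ d2 * \sum_(k < (d1 - d2).+1) z1 ^+ (d1 - d2 - k) * z2 ^+ k.
Proof.
pose tab (k : 'I_(d1 - d2).+1) := tableau k.
have k_le (k : 'I_(d1 - d2).+1) : (k <= d1)%N by have := ltn_ord k; lia.
have tab_inj : injective tab.
  move=> k k' /(congr1 (fun T => tcount n d1 d2 T ord_max)).
  have [_ ->] := tcount_tableau (k_le k); have [_ ->] := tcount_tableau (k_le k').
  by move/addnI; apply: val_inj.
rewrite /schur2 (eq_bigl (mem (tab @: setT))); last first.
  move=> T; apply/idP/imsetP => [/ssyt_is_tableau[k k_lt ->]|[k _ ->]].
    by exists (Ordinal (k_lt : (k < (d1 - d2).+1)%N)).
  exact: ssyt_tableau (ltn_ord k).
rewrite big_imset /=; last by move=> k k' _ _; apply: tab_inj.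
rewrite mulr_sumr; apply: eq_big => [k|k _]; first by rewrite inE.
have [-> ->] := tcount_tableau (k_le k).
rewrite (_ : d1 - k = d2 + (d1 - d2 - k))%N; last by have := ltn_ord k; lia.
by rewrite !exprD exprMn; ring.
Qed.

Lemma schur2_eq0 (R : idomainType) (z1 z2 : R) : z1 != 0 -> z2 != 0 -> z1 != z2 ->
  (schur2 n d1 d2 z1 z2 == 0) = (z1 ^+ (d1 - d2).+1 == z2 ^+ (d1 - d2).+1).
Proof.
move=> z1_nz z2_nz z12; rewrite schur2E mulf_eq0.
rewrite (negbTE (expf_neq0 _ (mulf_neq0 z1_nz z2_nz))) /=.
by rewrite -[RHS]subr_eq0 subrXX mulf_eq0 subr_eq0 (negbTE z12).
Qed.

End TwoRowTableaux.

Local Open Scope ring_scope.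

Lemma semicircle_coord_eq (R : realFieldType) (a b c s : R) :
    a ^+ 2 + b ^+ 2 = 1 -> c ^+ 2 + s ^+ 2 = 1 -> 0 <= b -> 0 <= s -> a != 1 ->
    c <= a -> c * (a ^+ 2 - b ^+ 2) + 2 * a * b * s <= c ->
  c = a /\ s = b.
Proof.
move=> ab_unit cs_unit b_ge0 s_ge0 a_neq1 c_le_a rot_le.
have c_eq_a : c = a.
  have [b0|b_neq0] := eqVneq b 0.
    have : a ^+ 2 = 1 by rewrite -ab_unit b0 expr0n addr0.
    by move/eqP; rewrite sqrf_eq1 (negbTE a_neq1) => /eqP a_eqN1; nra.
  have b_gt0 : 0 < b by rewrite lt_def b_neq0.
  have cross : (a * s - b * c) * (b + s) = (a - c) * (1 + a * c + b * s).
    have unit_rel : a * (c ^+ 2 + s ^+ 2 - 1) + c * (1 - a ^+ 2 - b ^+ 2) = 0.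
      by rewrite cs_unit -addrA -opprD ab_unit !subrr !mulr0 addr0.
    by apply/eqP; rewrite -subr_eq0 -unit_rel; apply/eqP; ring.
  (* [rot_le] says b (a s - b c) <= 0, and 2 (1 + a c + b s) = (a + c)^2 + (b + s)^2. *)
  have : a * s - b * c <= 0 by nra.
  have : 0 < 1 + a * c + b * s by nra.
  nra.
split=> //; subst c.
have : s ^+ 2 = b ^+ 2 by lra.
by move/eqP; rewrite eqf_sqr => /orP[/eqP//|/eqP s_eqN]; nra.
Qed.

Lemma semicircle_rot_eq (y s : algC) :
    `|y| = 1 -> `|s| = 1 -> 0 <= 'Im y -> 0 <= 'Im s -> y != 1 ->
    'Re s <= 'Re y -> 'Re (s * y^* ^+ 2) <= 'Re s ->
  s = y.
Proof.
move=> y_unit s_unit Im_y Im_s y_neq1 Re_le rot_le.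
have Re_rot : 'Re (s * y^* ^+ 2)
            = 'Re s * ('Re y ^+ 2 - 'Im y ^+ 2) + 2 * 'Re y * 'Im y * 'Im s.
  by rewrite expr2 !ReM !ImM !Re_conj !Im_conj; ring.
have ReIm_unit (z : algC) : `|z| = 1 -> 'Re z ^+ 2 + 'Im z ^+ 2 = 1.
  by move=> z_unit; rewrite -normC2_Re_Im z_unit expr1n.
have [] :=
  @semicircle_coord_eq _ (in_algR (Creal_Re y)) (in_algR (Creal_Im y))
                         (in_algR (Creal_Re s)) (in_algR (Creal_Im s)).
- by apply: val_inj; rewrite /= -!expr2 ReIm_unit.
- by apply: val_inj; rewrite /= -!expr2 ReIm_unit.
- exact: Im_y.
- exact: Im_s.
- apply: contra y_neq1 => /eqP /(congr1 val) /= Re1.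
  have Im0 : 'Im y = 0.
    apply/eqP; rewrite -sqrf_eq0; apply/eqP/(@addrI _ 1).
    by rewrite addr0 -{1}(expr1n _ 2) -Re1 ReIm_unit.
  by rewrite [y]Crect Re1 Im0 mulr0 addr0.
- exact: Re_le.
- by rewrite Re_rot in rot_le.
- move=> /(congr1 val) /= Re_eq /(congr1 val) /= Im_eq.
  by rewrite [s]Crect [y]Crect Re_eq Im_eq.
Qed.

Section PrincipalRootOfMinusOne.
Variable n : nat.
Hypothesis n_gt1 : (1 < n)%N.
Let n_gt0 : (0 < n)%N := ltnW n_gt1.

Lemma zetaXn : zeta n ^+ n = -1.
Proof. exact: rootCK. Qed.

Lemma norm_rootN1 (z : algC) : z ^+ n = -1 -> `|z| = 1.
Proof. by move=> zn; apply/eqP; rewrite -(pexpr_eq1 n_gt0) // -normrX zn normrN1. Qed.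

Lemma Re_rootN1_le (z : algC) : z ^+ n = -1 -> 'Re z <= 'Re (zeta n).
Proof.
move=> zn; case: (real_ge0P (Creal_Im z)) => [Im_ge0|/ltW Im_le0].
  exact: rootC_Re_max.
rewrite -Re_conj; apply: rootC_Re_max => //; last by rewrite Im_conj oppr_ge0.
by rewrite -rmorphXn zn rmorphN1.
Qed.

Lemma zeta_neq1 : zeta n != 1.
Proof.
apply/eqP => zeta1; move: zetaXn; rewrite zeta1 expr1n => /eqP.
by rewrite eq_sym lt_eqF // (lt_trans (ltrN10 _) ltr01).
Qed.

Lemma rootN1_rot_le_eq (s : algC) : s ^+ n = -1 ->
    'Re (s * zeta n ^+ 2) <= 'Re s -> 'Re (s * (zeta n)^* ^+ 2) <= 'Re s ->
  s = zeta n \/ s = (zeta n)^*.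
Proof.
move=> sn rot_le rot_le'; have Im_zeta := Im_rootC_ge0 (-1) n_gt1.
have zeta_unit := norm_rootN1 zetaXn.
case: (real_ge0P (Creal_Im s)) => [Im_ge0|/ltW Im_le0].
  left; apply: semicircle_rot_eq => //.
  - exact: norm_rootN1.
  - exact: zeta_neq1.
  - exact: Re_rootN1_le.
have snc : s^* ^+ n = -1 by rewrite -rmorphXn sn rmorphN1.
right; rewrite -[s]conjCK; congr _^*; apply: semicircle_rot_eq => //.
- exact: norm_rootN1.
- by rewrite Im_conj oppr_ge0.
- exact: zeta_neq1.
- exact: Re_rootN1_le.
- by rewrite -rmorphXn -rmorphM !Re_conj.
Qed.

(* In algC, [zeta n] is only known to maximise the real part among the roots of
   z^n = -1 in the closed upper half plane.  For a primitive 2n-th root w, the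
   point of largest real part in the coset w <zeta^2> (all roots of -1) is
   therefore zeta or its conjugate, whence w lies in <zeta>. *)
Lemma zeta_prim_root : (2 * n).-primitive_root (zeta n).
Proof.
set y := zeta n; have n2_gt0 : (0 < 2 * n)%N by rewrite muln_gt0.
have y2n : (y ^+ 2) ^+ n = 1 by rewrite -exprM mulnC exprM zetaXn sqrrN expr1n.
have [m prim_m m_dvd] := prim_order_exists n2_gt0 (etrans (exprM _ _ _) y2n).
suff dvd_m : (2 * n %| m)%N.
  by rewrite (_ : 2 * n = m)%N //; apply/eqP; rewrite eqn_dvd dvd_m m_dvd.
have [w prim_w] := C_prim_root_exists n2_gt0.
have wn : w ^+ n = -1.
  have /eqP : (w ^+ n) ^+ 2 = 1 by rewrite -exprM mulnC prim_expr_order.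
  rewrite sqrf_eq1 -(prim_order_dvd prim_w) => /orP[/(dvdn_leq n_gt0)|/eqP//].
  by rewrite leqNgt ltn_Pmull.
pose F (j : 'I_n) := 'Re (w * (y ^+ 2) ^+ j).
have [j0 _ j0_max] :=
  @real_arg_maxP _ _ (Ordinal n_gt0) xpredT F isT (fun j _ => Creal_Re _).
set s := w * (y ^+ 2) ^+ j0.
have Re_coset k : 'Re (w * (y ^+ 2) ^+ k) <= 'Re s.
  by rewrite -(expr_mod k y2n); apply: (j0_max (Ordinal (ltn_pmod k n_gt0))).
have sn : s ^+ n = -1 by rewrite exprMn wn [X in _ * X]exprAC y2n expr1n mulr1.
have conj_y2 : y^* ^+ 2 = (y ^+ 2) ^+ n.-1.
  have y_nz : y != 0 by rewrite -normr_eq0 (norm_rootN1 zetaXn) oner_eq0.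
  have y_conj : y * y^* = 1 by rewrite -normCK (norm_rootN1 zetaXn) expr1n.
  apply: (mulfI (expf_neq0 2 y_nz)).
  by rewrite -exprMn y_conj expr1n -exprS prednK.
have s_eq : s = y \/ s = y^*.
  apply: rootN1_rot_le_eq sn _ _.
    by rewrite -mulrA -exprSr; apply: Re_coset.
  by rewrite conj_y2 -mulrA -exprD; apply: Re_coset.
have sm : s ^+ m = 1.
  by case: s_eq => ->; rewrite -?rmorphXn (prim_expr_order prim_m) ?rmorph1.
rewrite (prim_order_dvd prim_w); move: sm.
by rewrite exprMn -!exprM mulnC exprM (prim_expr_order prim_m) expr1n mulr1 => ->.
Qed.

End PrincipalRootOfMinusOne.

Lemma dvdn_mul2_half (n k m : nat) : ~~ odd k -> (2 * n %| k * m)%N = (n %| k./2 * m)%N.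
Proof.
move=> k_even; rewrite -[RHS](@dvdn_pmul2l 2) // mulnA [(2 * k./2)%N]mulnC muln2.
by rewrite even_halfK.
Qed.

Theorem lemma4p7 (n d1 d2 s t a b : nat) :
  (2 < n)%N ->
  (d2 <= d1)%N -> (d1 <= n - 2)%N ->
  (1 <= s)%N -> (s < t)%N -> (t <= n)%N ->
  vsteps n d1 d2 =i [:: s; t] ->
  odd a -> odd b -> (0 < a)%N -> (a < b)%N -> (b < 2 * n)%N ->
  (schur2 (R:=algC) n d1 d2 (zeta n ^+ a) (zeta n ^+ b) == 0)
    = (n %| (b - a)./2 * (t - s))%N.
Proof.
move=> n_gt2 d21 d1n _ s_lt_t _ st_vsteps a_odd b_odd _ a_lt_b b_lt.
have n_gt1 : (1 < n)%N := ltnW n_gt2.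
have prim := zeta_prim_root n_gt1.
have zeta_nz : zeta n != 0 by rewrite rootC_eq0 ?oppr_eq0 ?oner_eq0 // ltnW.
have zeta_ab : zeta n ^+ a != zeta n ^+ b.
  rewrite (eq_prim_root_expr prim) eq_sym eqn_mod_dvd ?(ltnW a_lt_b) //.
  by rewrite gtnNdvd ?subn_gt0 //; lia.
rewrite (vsteps_gap n_gt1 d21 d1n st_vsteps s_lt_t) schur2_eq0 ?expf_neq0 //.
rewrite -!exprM (eq_prim_root_expr prim) eq_sym eqn_mod_dvd; last first.
  by rewrite leq_mul2r ltnW ?orbT.
by rewrite -mulnBl dvdn_mul2_half // oddB ?(ltnW a_lt_b) // a_odd b_odd.
Qed.
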